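(* Let $S$ be a finite set of points in $\mathbb{R}^d$ with Euclidean distance, $f\ge0$ an integer, $0<\theta<\pi/4$, $\mathcal{C}$ a cone collection as in the context, and $\Theta=\Theta(\theta,2f+1)$. Let $F$ be a set of edges of $\Theta$ such that $(S,F)$ has maximum degree at most $f$. Let $\{p,q\}$ be an edge of $K_S\setminus F$ that is not an edge of $\Theta$, and let $C\in\mathcal{C}$ be a cone with $q\in C+p$. Then there is a point $r\in S_{p,C}$ such that: $r\ne q$; the orthogonal projection of $r$ onto the ray $\ell_C+p$ is at least as close to $p$ as the orthogonal projection of $q$ onto $\ell_C+p$; $\{p,r\}$ is an edge of $\Theta\setminus F$; and $\{r,q\}$ is an edge of $K_S\setminus F$.
   Context: $K_S$ is the complete graph on $S$ with edge weights the Euclidean distances; $X\setminus F$ is $X$ with the edges of $F$ removed. $\mathcal{C}$ is a finite collection of cones with apex at the origin covering $\mathbb{R}^d$, each of angular diameter at most $\theta$, i.e. $\max\{\angle(0x,0y):x,y\in C\setminus\{0\}\}\le\theta$. For each $C\in\mathcal{C}$ fix a ray $\ell_C$ from the origin contained in $C$. For $p\in S$: $C+p=\{x+p:x\in C\}$, $\ell_C+p$ is the translate of $\ell_C$ emanating from $p$, and $S_{p,C}=(C+p)\cap(S\setminus\{p\})$. The graph $\Theta(\theta,k)$ has vertex set $S$, and for each $p\in S$ and $C\in\mathcal{C}$ it contains an edge from $p$ to each of $\min(k,|S_{p,C}|)$ points of $S_{p,C}$ whose orthogonal projections onto $\ell_C+p$ are closest to $p$ (ties broken arbitrarily). *)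

From HB Require Import structures.
From mathcomp Require Import all_boot all_order all_algebra.
From mathcomp Require Import boolp classical_sets reals trigo.
Set Implicit Arguments. Unset Strict Implicit. Unset Printing Implicit Defensive.
Import Order.TTheory GRing.Theory Num.Theory.
Local Open Scope ring_scope.

Section Defs.
Variables (R : realType) (d : nat).
Notation pt := 'rV[R]_d.

Definition dotv (x y : pt) : R := (x *m y^T) 0 0.
Definition enorm (x : pt) : R := Num.sqrt (dotv x x).
Definition edist (x y : pt) : R := enorm (x - y).

Definition vangle (x y : pt) : R := acos (dotv x y / (enorm x * enorm y)).

Definition is_cone (C : set pt) : Prop :=
  forall (x : pt) (t : R), C x -> 0 <= t -> C (t *: x).

Definition ang_diam_le (C : set pt) (theta : R) : Prop :=
  forall x y : pt, C x -> C y -> x != 0 -> y != 0 -> vangle x y <= theta.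

(* A finite collection of cones (indexed by a finType I) covering R^d, each of
   angular diameter at most theta, with for each cone a chosen ray
   l_C = {t u | t >= 0} (u <> 0) contained in it. *)
Definition cone_collection (I : finType) (C : I -> set pt) (u : I -> pt)
    (theta : R) : Prop :=
  [/\ forall i, is_cone (C i),
      forall i, ang_diam_le (C i) theta,
      forall x : pt, exists i, C i x,
      forall i, u i != 0 &
      forall i (t : R), 0 <= t -> C i (t *: u i)].

(* Orthogonal projection of x onto the ray l + p = {p + t u | t >= 0}
   (the nearest point of the closed ray). *)
Definition proj_ray (u p x : pt) : pt :=
  p + (Num.max 0 (dotv (x - p) u / dotv u u)) *: u.

Variables (V : finType) (pos : V -> pt) (I : finType) (C : I -> set pt)
          (u : I -> pt).

Definition SpC (p : V) (i : I) : {set V} :=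
  [set v | (v != p) && `[< C i (pos v - pos p) >]].

Definition pdist (p : V) (i : I) (v : V) : R :=
  edist (proj_ray (u i) (pos p) (pos v)) (pos p).

(* sel is a valid choice of Theta(theta,k)-neighbours: for each p and cone i,
   sel p i consists of min(k, |S_{p,C}|) points of S_{p,C} whose projections
   are closest to p (ties broken arbitrarily). *)
Definition theta_selection (k : nat) (sel : V -> I -> {set V}) : Prop :=
  forall p i,
    [/\ sel p i \subset SpC p i,
        #|sel p i| = minn k #|SpC p i| &
        forall x y, x \in sel p i -> y \in SpC p i :\: sel p i ->
          pdist p i x <= pdist p i y].

Definition theta_edge (sel : V -> I -> {set V}) (a b : V) : Prop :=
  exists i, (b \in sel a i) \/ (a \in sel b i).

End Defs.

From HB Require Import structures.
From mathcomp Require Import all_boot all_order all_algebra.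
From mathcomp Require Import boolp classical_sets reals trigo.
Import Order.TTheory GRing.Theory Num.Theory.
Set Implicit Arguments. Unset Strict Implicit. Unset Printing Implicit Defensive.
Local Open Scope ring_scope.

(* Since q is not among the 2f+1 nearest points of S_{p,C} selected in the cone,
   that selection is full. Each edge of F at p rules out one selected r as a
   partner for p, each edge of F at q rules out one selected r as a partner for
   q, so at most 2f of the 2f+1 selected points are ruled out. *)

Lemma set2_injr (T : finType) (v : T) : injective (fun r : T => [set v; r]).
Proof.
move=> r r' /setP eq_vr.
have := eq_vr r; rewrite set22 => /esym/set2P[rv|//].
by have := eq_vr r'; rewrite set22 rv => /set2P[|].
Qed.

Lemma card_set2_in_le_deg (T : finType) (F : {set {set T}}) (v : T) :
  (#|[set r | [set v; r] \in F]| <= #|[set e in F | v \in e]|)%N.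
Proof.
rewrite -(card_imset _ (@set2_injr _ v)); apply: subset_leq_card.
apply/fintype.subsetP => e /imsetP[r]; rewrite inE => vrF ->.
by rewrite inE vrF set21.
Qed.

Lemma not_subset_setU_card (T : finType) (A B1 B2 : {set T}) :
  (#|B1| + #|B2| < #|A|)%N -> ~~ (A \subset B1 :|: B2).
Proof.
move=> card_lt; apply/negP => /subset_leq_card le_A.
by move: (leq_trans le_A (leq_card_setU B1 B2)); rewrite leqNgt card_lt.
Qed.

Section ThetaSelection.
Variables (R : realType) (d : nat) (V : finType) (pos : V -> 'rV[R]_d).
Variables (I : finType) (C : I -> set 'rV[R]_d) (u : I -> 'rV[R]_d).
Variables (k : nat) (sel : V -> I -> {set V}).
Hypothesis hsel : theta_selection pos C u k sel.

Lemma theta_selection_full p i q :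
  q \in SpC pos C p i :\: sel p i -> #|sel p i| = k.
Proof.
case/setDP => qS q_unsel; have [sub_sel card_sel _] := hsel p i.
rewrite card_sel; apply/minn_idPl; rewrite leqNgt; apply: contra q_unsel => lt_S.
suff -> : sel p i = SpC pos C p i by [].
by apply/eqP; rewrite eqEcard sub_sel card_sel leq_min (ltnW lt_S) leqnn.
Qed.

End ThetaSelection.

Theorem lemma10 (R : realType) (d : nat)
  (V : finType) (pos : V -> 'rV[R]_d) (pos_inj : injective pos)
  (f : nat) (theta : R) (theta_pos : 0 < theta) (theta_lt : theta < pi / 4)
  (I : finType) (C : I -> set 'rV[R]_d) (u : I -> 'rV[R]_d)
  (hC : cone_collection C u theta)
  (sel : V -> I -> {set V}) (hsel : theta_selection pos C u (2 * f).+1 sel)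
  (F : {set {set V}})
  (hF : forall e, e \in F -> exists a b, [/\ e = [set a; b], a != b & theta_edge sel a b])
  (hdeg : forall v : V, (#|[set e in F | v \in e]| <= f)%N)
  (p q : V) (hpq : p != q) (hpqF : [set p; q] \notin F)
  (hpqT : ~ theta_edge sel p q)
  (i : I) (hq : C i (pos q - pos p)) :
  exists r : V,
    [/\ r \in SpC pos C p i,
        r != q,
        pdist pos u p i r <= pdist pos u p i q,
        theta_edge sel p r /\ [set p; r] \notin F &
        r != q /\ [set r; q] \notin F].
Proof.
have [sub_sel _ sel_nearest] := hsel p i.
have q_unsel : q \notin sel p i by apply/negP => q_sel; apply: hpqT; exists i; left.
have qD : q \in SpC pos C p i :\: sel p i.
  by rewrite !inE q_unsel eq_sym hpq; apply/asboolP.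
pose Bp := [set r | [set p; r] \in F].
pose Bq := [set r | [set q; r] \in F].
have few_bad : (#|Bp| + #|Bq| < #|sel p i|)%N.
  rewrite (theta_selection_full hsel qD) mul2n -addnn ltnS.
  by apply: leq_add; apply: leq_trans (card_set2_in_le_deg _ _) (hdeg _).
have /fintype.subsetPn[r r_sel r_good] := not_subset_setU_card few_bad.
rewrite !inE negb_or in r_good; case/andP: r_good => prF qrF.
have rq : r != q by apply: contraNneq q_unsel => <-.
exists r; split.
- exact: (fintype.subsetP sub_sel).
- exact: rq.
- exact: sel_nearest.
- by split => //; exists i; left.
- by rewrite finset.setUC.
Qed.
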